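(* For every formula $\phi$ of the language of $\mathbf{GLP}$, $\mathbf{GLP}\vdash[1]\phi$ if and only if $\mathbf{GLP}\{[0]q\to q\}\vdash\phi$.
   Context: $\mathbf{GLP}$ is the propositional polymodal logic with modalities $[0],[1],[2],\dots$ ($\langle k\rangle:=\neg[k]\neg$) axiomatized by classical tautologies; $[k](\phi\to\psi)\to([k]\phi\to[k]\psi)$; $[k]([k]\phi\to\phi)\to[k]\phi$; $\langle j\rangle\phi\to[k]\langle j\rangle\phi$ for $j<k$; $[j]\phi\to[k]\phi$ for $j\leq k$; rules modus ponens and necessitation. $\mathbf{GLP}\{[0]q\to q\}$ (with $q$ a propositional variable) is the smallest set of formulas containing all theorems of $\mathbf{GLP}$ and the formula $[0]q\to q$ and closed under modus ponens and substitution (replacing variables uniformly by formulas); necessitation is not a rule of this set. *)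

From Stdlib Require Import Arith.

Inductive form : Type :=
| Var : nat -> form
| Bot : form
| Imp : form -> form -> form
| Box : nat -> form -> form.

Definition Neg (p : form) : form := Imp p Bot.
Definition Dia (k : nat) (p : form) : form := Neg (Box k (Neg p)).

Fixpoint peval (v : form -> bool) (p : form) : bool :=
  match p with
  | Var n => v (Var n)
  | Bot => false
  | Imp a b => implb (peval v a) (peval v b)
  | Box k a => v (Box k a)
  end.

(* Classical tautology = instance of a propositional tautology:
   true under every boolean valuation of its maximal non-propositional
   subformulas (variables and boxed formulas). *)
Definition tautology (p : form) : Prop := forall v : form -> bool, peval v p = true.

Inductive GLP : form -> Prop :=
| glp_taut : forall p, tautology p -> GLP p
| glp_K : forall k p q, GLP (Imp (Box k (Imp p q)) (Imp (Box k p) (Box k q)))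
| glp_Lob : forall k p, GLP (Imp (Box k (Imp (Box k p) p)) (Box k p))
| glp_dia : forall j k p, j < k -> GLP (Imp (Dia j p) (Box k (Dia j p)))
| glp_mono : forall j k p, j <= k -> GLP (Imp (Box j p) (Box k p))
| glp_mp : forall p q, GLP (Imp p q) -> GLP p -> GLP q
| glp_nec : forall k p, GLP p -> GLP (Box k p).

Fixpoint subst (s : nat -> form) (p : form) : form :=
  match p with
  | Var n => s n
  | Bot => Bot
  | Imp a b => Imp (subst s a) (subst s b)
  | Box k a => Box k (subst s a)
  end.

(* GLP{[0]q -> q} with q the propositional variable Var 0: the smallest set
   containing GLP theorems and [0]q -> q, closed under MP and substitution
   (no necessitation). *)
Inductive GLP_refl0 : form -> Prop :=
| r_glp : forall p, GLP p -> GLP_refl0 p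
| r_ax : GLP_refl0 (Imp (Box 0 (Var 0)) (Var 0))
| r_mp : forall p q, GLP_refl0 (Imp p q) -> GLP_refl0 p -> GLP_refl0 q
| r_subst : forall s p, GLP_refl0 p -> GLP_refl0 (subst s p).

(* (<=) GLP proves [1]([0]q -> q): if [0]q then [1]q, and otherwise [1]~[0]q
   by the axiom <0>~q -> [1]<0>~q.  Hence prefixing [1] to a derivation from
   [0]q -> q (using necessitation for GLP-theorems, K for modus ponens, and
   closure of GLP under substitution) gives a GLP-derivation of [1]phi.
   (=>) Read the outermost boxes of a formula as [0]a |-> [0]a,
   [1]a |-> [1]a /\ a and [k]a |-> Top for k >= 2.  Every axiom of GLP becomes a
   theorem of GLP{[0]q -> q} (monotonicity [0]a -> [1]a becomes an instance of
   [0]a -> a), and modus ponens and necessitation are preserved; so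
   GLP |- [1]phi yields GLP{[0]q -> q} |- [1]phi /\ phi. *)
From Stdlib Require Import Lia.

Definition And (a b : form) : form := Imp (Imp a (Imp b Bot)) Bot.
Definition Top : form := Imp Bot Bot.

Ltac prove_tautology :=
  let v := fresh "v" in
  intro v; unfold And, Top, Dia, Neg in *; simpl;
  repeat match goal with
  | |- context [peval v ?x] => destruct (peval v x)
  | |- context [v ?x] => destruct (v x)
  end; reflexivity.

Section TautologicalClosure.

Variable T : form -> Prop.
Hypothesis T_taut : forall p, tautology p -> T p.
Hypothesis T_mp : forall p q, T (Imp p q) -> T p -> T q.

Lemma taut_mp1 a b : T a -> tautology (Imp a b) -> T b.
Proof. intros Ha Hab. exact (T_mp _ _ (T_taut _ Hab) Ha). Qed.

Lemma taut_mp2 a b c : T a -> T b -> tautology (Imp a (Imp b c)) -> T c.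
Proof.
  intros Ha Hb Habc. exact (T_mp _ _ (T_mp _ _ (T_taut _ Habc) Ha) Hb).
Qed.

Lemma imp_trans a b c : T (Imp a b) -> T (Imp b c) -> T (Imp a c).
Proof. intros Hab Hbc. apply (taut_mp2 _ _ _ Hab Hbc). prove_tautology. Qed.

End TautologicalClosure.

Arguments taut_mp1 {T} T_taut T_mp {a b}.
Arguments taut_mp2 {T} T_taut T_mp {a b c}.
Arguments imp_trans {T} T_taut T_mp {a b c}.

Lemma refl0_taut p : tautology p -> GLP_refl0 p.
Proof. intro Hp. exact (r_glp _ (glp_taut _ Hp)). Qed.

Definition prop_hom (f : form -> form) : Prop :=
  f Bot = Bot /\ forall a b, f (Imp a b) = Imp (f a) (f b).

Lemma peval_prop_hom f v p :
  prop_hom f -> peval v (f p) = peval (fun x => peval v (f x)) p.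
Proof.
  intros [fBot fImp]; induction p as [n| |a IHa b IHb|k a]; simpl; auto.
  - now rewrite fBot.
  - now rewrite fImp; simpl; rewrite IHa, IHb.
Qed.

Lemma tautology_prop_hom f p : prop_hom f -> tautology p -> tautology (f p).
Proof. intros Hf Hp v. rewrite peval_prop_hom by exact Hf. apply Hp. Qed.

Lemma GLP_subst s p : GLP p -> GLP (subst s p).
Proof.
  induction 1; simpl.
  - apply glp_taut, tautology_prop_hom; [split; reflexivity | assumption].
  - apply glp_K.
  - apply glp_Lob.
  - now apply glp_dia.
  - now apply glp_mono.
  - eapply glp_mp; eassumption.
  - now apply glp_nec.
Qed.

Lemma GLP_box_imp k a b : GLP (Imp a b) -> GLP (Imp (Box k a) (Box k b)).
Proof. intro Hab. exact (glp_mp _ _ (glp_K k a b) (glp_nec k _ Hab)). Qed.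

Lemma GLP_neg_box_box j k q :
  j < k -> GLP (Imp (Neg (Box j q)) (Box k (Neg (Box j q)))).
Proof.
  intro Hjk.
  assert (to_dneg : GLP (Imp (Box j q) (Box j (Neg (Neg q))))).
  { apply GLP_box_imp, glp_taut. prove_tautology. }
  assert (from_dneg : GLP (Imp (Box j (Neg (Neg q))) (Box j q))).
  { apply GLP_box_imp, glp_taut. prove_tautology. }
  apply (imp_trans glp_taut glp_mp (b := Dia j (Neg q))).
  - apply (taut_mp1 glp_taut glp_mp from_dneg). prove_tautology.
  - apply (imp_trans glp_taut glp_mp (glp_dia j k (Neg q) Hjk)), GLP_box_imp.
    apply (taut_mp1 glp_taut glp_mp to_dneg). prove_tautology.
Qed.

Lemma GLP_box_reflection j k q : j < k -> GLP (Box k (Imp (Box j q) q)).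
Proof.
  intro Hjk.
  assert (if_box : GLP (Imp (Box j q) (Box k (Imp (Box j q) q)))).
  { apply (imp_trans glp_taut glp_mp (glp_mono j k q ltac:(lia))).
    apply GLP_box_imp, glp_taut. prove_tautology. }
  assert (if_not_box : GLP (Imp (Neg (Box j q)) (Box k (Imp (Box j q) q)))).
  { apply (imp_trans glp_taut glp_mp (GLP_neg_box_box j k q Hjk)).
    apply GLP_box_imp, glp_taut. prove_tautology. }
  apply (taut_mp2 glp_taut glp_mp if_box if_not_box). prove_tautology.
Qed.

Lemma GLP_box1_of_refl0 phi : GLP_refl0 phi -> GLP (Box 1 phi).
Proof.
  induction 1 as [p Hp| |p q _ IHpq _ IHp|s p _ IHp].
  - now apply glp_nec.
  - apply GLP_box_reflection; lia.
  - exact (glp_mp _ _ (glp_mp _ _ (glp_K 1 p q) IHpq) IHp).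
  - exact (GLP_subst s (Box 1 p) IHp).
Qed.

Definition reflect_box (k : nat) (a : form) : form :=
  match k with
  | 0 => Box 0 a
  | 1 => And (Box 1 a) a
  | _ => Top
  end.

Fixpoint reflect_outer (p : form) : form :=
  match p with
  | Var n => Var n
  | Bot => Bot
  | Imp a b => Imp (reflect_outer a) (reflect_outer b)
  | Box k a => reflect_box k a
  end.

Lemma refl0_reflect_outer chi : GLP chi -> GLP_refl0 (reflect_outer chi).
Proof.
  (* Every instance involving a box of index >= 2 becomes a tautology. *)
  induction 1 as [p Hp|k p q|k p|j k p Hjk|j k p Hjk|p q _ IHpq _ IHp|k p Hp];
    simpl.
  - apply refl0_taut, tautology_prop_hom; [split; reflexivity | assumption].
  - destruct k as [|[|k]]; simpl; try (apply refl0_taut; prove_tautology).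
    + exact (r_glp _ (glp_K 0 p q)).
    + apply (taut_mp1 refl0_taut r_mp (r_glp _ (glp_K 1 p q))). prove_tautology.
  - destruct k as [|[|k]]; simpl; try (apply refl0_taut; prove_tautology).
    + exact (r_glp _ (glp_Lob 0 p)).
    + apply (taut_mp1 refl0_taut r_mp (r_glp _ (glp_Lob 1 p))). prove_tautology.
  - destruct j as [|[|j]], k as [|[|k]]; simpl; try lia;
      try (apply refl0_taut; prove_tautology).
    apply (taut_mp1 refl0_taut r_mp (r_glp _ (glp_dia 0 1 p Hjk))).
    prove_tautology.
  - destruct j as [|[|j]], k as [|[|k]]; simpl; try lia;
      try (apply refl0_taut; prove_tautology).
    pose proof (r_subst (fun _ => p) _ r_ax : GLP_refl0 (Imp (Box 0 p) p))
      as reflection.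
    apply (taut_mp2 refl0_taut r_mp (r_glp _ (glp_mono 0 1 p Hjk)) reflection).
    prove_tautology.
  - exact (r_mp _ _ IHpq IHp).
  - destruct k as [|[|k]]; simpl; try (apply refl0_taut; prove_tautology).
    + exact (r_glp _ (glp_nec 0 p Hp)).
    + apply (taut_mp2 refl0_taut r_mp (r_glp _ (glp_nec 1 p Hp)) (r_glp _ Hp)).
      prove_tautology.
Qed.

Theorem mainTheorem10 : forall phi : form, GLP (Box 1 phi) <-> GLP_refl0 phi.
Proof.
  intro phi; split.
  - intro H.
    pose proof (refl0_reflect_outer _ H : GLP_refl0 (And (Box 1 phi) phi))
      as reflected.
    apply (taut_mp1 refl0_taut r_mp reflected). prove_tautology.
  - apply GLP_box1_of_refl0.
Qed.
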